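(* Let $C\subset\mathbb R^3$ be a non-closed embedded curve of length $l>0$ with nowhere vanishing curvature and arc-length parametrization $\mathbf c:[-l/2,l/2]\to\mathbb R^3$ inducing its orientation. Let $F\in\mathcal D_*(C)$ be a normal form with $F(s,0)=\mathbf c(s)$, and let $T$ be a non-trivial symmetry of $C$. Then: (1) if $T$ is a positive symmetry, then $T\circ F=F_*$; moreover, if $\mu_F$ has a symmetry, then $T\circ F(-s,v)=\check F(s,v)$; (2) if $T$ is a negative symmetry, then $T\circ F=\check F_*$; moreover, if $\mu_F$ has a symmetry, then $T\circ F(-s,v)=F(s,v)$.
   Context: $-C$ denotes $C$ with reversed orientation. For a regular parametrization $\mathbf c_f$ of $C$: curvature $\kappa_f$, torsion $\tau_f$, Frenet frame $(\mathbf e,\mathbf n,\mathbf b)$; $\kappa$ is the curvature of $\mathbf c$. A developable strip along $C$ is the germ along $C$ of a $C^\infty$ embedding $f(u,v)=f(u,0)+v\,\xi_f(u)$ with $\mathbf c_f(u):=f(u,0)$ parametrizing $C$, $\xi_f$ unit, and zero Gaussian curvature; write $\xi_f=\cos\beta_f\,\mathbf e+\sin\beta_f(\cos\alpha_f\,\mathbf n+\sin\alpha_f\,\mathbf b)$. $\mathcal D(C)$: such strips with $\mathbf c_f$ inducing the orientation of $C$ and $0<|\cos\alpha_f|<1$, normalized by $0<|\alpha_f|<\pi/2$ (first angular function), $0<\beta_f<\pi$. Geodesic curvature $\mu_f=\kappa_f\cos\alpha_f$; admissible ($\in\mathcal D_*(C)$) if $\mu_f<\min\kappa_f$ everywhere.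 A normal form is a strip $F(s,v)$ defined near $[-l/2,l/2]\times\{0\}$ with $s\mapsto F(s,0)$ an arc-length parametrization of $C$ (of either orientation); a normal form is determined by that parametrization and its first angular function $\alpha$ (since zero Gaussian curvature means $\cot\beta=(\alpha'+\tau)/(\kappa\sin\alpha)$), and every smooth $\alpha$ with values in $(-\pi/2,\pi/2)\setminus\{0\}$ occurs. Dual: $\check F$ is the normal form with $\check F(s,0)=F(s,0)$ and first angular function $-\alpha_F$. Inverse: $F_*\in\mathcal D_*(-C)$ is the normal form with $F_*(s,0)=\mathbf c(-s)$ whose first angular function (w.r.t. the Frenet frame of $s\mapsto\mathbf c(-s)$) has the same sign as $\alpha_F(s)$ and satisfies $\kappa(-s)\cos\alpha_{F_*}(s)=\kappa(s)\cos\alpha_F(s)$; the inverse dual $\check F_*$ is the dual of $F_*$. A function $\mu$ on $[-l/2,l/2]$ has a symmetry if $\mu(-s)=\mu(s)$ for all $s$. A symmetry of $C$ is an isometry $T\ne\mathrm{id}$ of $\mathbb R^3$ with $T(C)=C$; it is non-trivial if $T(\mathbf x)\ne\mathbf x$ for some $\mathbf x\in C$, and positive (resp. negative) if $T$ preserves (resp. reverses) the orientation of $\mathbb R^3$. *)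

From Stdlib Require Import Reals.
From Coquelicot Require Import Coquelicot.
Open Scope R_scope.

Definition V3 := (R * R * R)%type.
Definition vx (a : V3) : R := fst (fst a).
Definition vy (a : V3) : R := snd (fst a).
Definition vz (a : V3) : R := snd a.
Definition mkV (x y z : R) : V3 := (x, y, z).
Definition vadd (a b : V3) : V3 := mkV (vx a + vx b) (vy a + vy b) (vz a + vz b).
Definition vscal (k : R) (a : V3) : V3 := mkV (k * vx a) (k * vy a) (k * vz a).
Definition vsub (a b : V3) : V3 := vadd a (vscal (-1) b).
Definition dot (a b : V3) : R := vx a * vx b + vy a * vy b + vz a * vz b.
Definition cross (a b : V3) : V3 :=
  mkV (vy a * vz b - vz a * vy b) (vz a * vx b - vx a * vz b) (vx a * vy b - vy a * vx b).
Definition vnorm (a : V3) : R := sqrt (dot a a).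
Definition det3 (a b c : V3) : R := dot (cross a b) c.
Definition e1 : V3 := mkV 1 0 0.
Definition e2 : V3 := mkV 0 1 0.
Definition e3 : V3 := mkV 0 0 1.

Definition Dv (c : R -> V3) : R -> V3 := fun t =>
  mkV (Derive (fun u => vx (c u)) t) (Derive (fun u => vy (c u)) t)
      (Derive (fun u => vz (c u)) t).

Definition smooth_fun (f : R -> R) : Prop := forall (n : nat) (t : R), ex_derive_n f n t.
Definition smooth_curve (c : R -> V3) : Prop :=
  smooth_fun (fun u => vx (c u)) /\ smooth_fun (fun u => vy (c u)) /\
  smooth_fun (fun u => vz (c u)).

Definition curvature (c : R -> V3) (s : R) : R :=
  vnorm (cross (Dv c s) (Dv (Dv c) s)) / (vnorm (Dv c s)) ^ 3.
Definition tangent (c : R -> V3) (s : R) : V3 := vscal (/ vnorm (Dv c s)) (Dv c s).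
Definition binormal (c : R -> V3) (s : R) : V3 :=
  vscal (/ vnorm (cross (Dv c s) (Dv (Dv c) s))) (cross (Dv c s) (Dv (Dv c) s)).
Definition principal_normal (c : R -> V3) (s : R) : V3 := cross (binormal c s) (tangent c s).
Definition torsion (c : R -> V3) (s : R) : R :=
  det3 (Dv c s) (Dv (Dv c) s) (Dv (Dv (Dv c)) s) / (vnorm (cross (Dv c s) (Dv (Dv c) s))) ^ 2.

(** Second angular function of a normal form, determined by zero Gaussian
    curvature: cot beta = (alpha' + tau) / (kappa sin alpha), 0 < beta < pi. *)
Definition beta_nf (c : R -> V3) (alpha : R -> R) (s : R) : R :=
  PI / 2 - atan ((Derive alpha s + torsion c s) / (curvature c s * sin (alpha s))).

Definition xi_nf (c : R -> V3) (alpha : R -> R) (s : R) : V3 :=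
  vadd (vscal (cos (beta_nf c alpha s)) (tangent c s))
       (vscal (sin (beta_nf c alpha s))
              (vadd (vscal (cos (alpha s)) (principal_normal c s))
                    (vscal (sin (alpha s)) (binormal c s)))).

Definition normal_form (c : R -> V3) (alpha : R -> R) : R -> R -> V3 :=
  fun s v => vadd (c s) (vscal v (xi_nf c alpha s)).

Definition rev_curve (c : R -> V3) : R -> V3 := fun s => c (- s).

Definition in_I (l s : R) : Prop := - (l / 2) <= s <= l / 2.

(** Equality of germs of strips along [-l/2,l/2] x {0}. *)
Definition germ_eq (l : R) (G H : R -> R -> V3) : Prop :=
  exists eps : R, 0 < eps /\
    forall s v, in_I l s -> Rabs v < eps -> G s v = H s v.

Definition isometry (T : V3 -> V3) : Prop :=
  forall x y, vnorm (vsub (T x) (T y)) = vnorm (vsub x y).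
Definition orient_det (T : V3 -> V3) : R :=
  det3 (vsub (T e1) (T (mkV 0 0 0))) (vsub (T e2) (T (mkV 0 0 0)))
       (vsub (T e3) (T (mkV 0 0 0))).
Definition positive_isometry (T : V3 -> V3) : Prop := isometry T /\ 0 < orient_det T.
Definition negative_isometry (T : V3 -> V3) : Prop := isometry T /\ orient_det T < 0.

Definition on_curve (l : R) (c : R -> V3) (x : V3) : Prop := exists t, in_I l t /\ x = c t.

Definition nontrivial_symmetry (l : R) (c : R -> V3) (T : V3 -> V3) : Prop :=
  isometry T /\ T <> (fun x => x) /\
  (forall x, on_curve l c x -> on_curve l c (T x)) /\
  (forall y, on_curve l c y -> exists x, on_curve l c x /\ T x = y) /\
  (exists x, on_curve l c x /\ T x <> x).

Definition mu_nf (c : R -> V3) (alpha : R -> R) (s : R) : R := curvature c s * cos (alpha s).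

(* Write the symmetry as [T x = p + A x] with [A] orthogonal of determinant [d = ±1].
   Since [T] preserves chords, it induces a self-map [φ] of [[-l/2, l/2]] with
   [T (c s) = c (φ s)] and [|c (φ s) - c (φ t)| = |c s - c t|]. Chords of a unit-speed curve
   are asymptotic to arc length, so [φ] is continuous, strictly monotone and has derivative
   [±1]; hence [φ s = ±s + K], and mapping the interval into itself forces [K = 0].
   Non-triviality excludes [φ = id], so [T (c s) = c (-s)].
   Differentiating this relation three times shows that the 3-jet of [s ↦ c (-s)] is the
   image under [A] of the 3-jet of [c]: [A] carries the Frenet frame along (the binormal up to
   the factor [d]), keeps the curvature and multiplies the torsion by [d]. So [A] maps the
   ruling of [F] to the ruling of the normal form along [s ↦ c (-s)] with first angular
   function [d α], and [α_* = α] because both strips have the same geodesic curvature. When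
   [μ_F] is even, so is [α], and the same computation at [-s] gives [T ∘ F (-s, v)] as the
   normal form along [c] with first angular function [-d α]. *)

From Stdlib Require Import Reals Lra Psatz ClassicalEpsilon.
From Coquelicot Require Import Coquelicot.
Open Scope R_scope.

Local Notation vzero := (mkV 0 0 0).

(** * Orthogonal maps and isometries of R^3 *)

Ltac destruct_V3 := repeat match goal with v : V3 |- _ =>
  match goal with |- context [v] =>
    let a := fresh "a" in let b := fresh "b" in let c := fresh "c" in
    destruct v as [[a b] c] end end.

Lemma V3_ext (a b : V3) : vx a = vx b -> vy a = vy b -> vz a = vz b -> a = b.
Proof. destruct a as [[? ?] ?], b as [[? ?] ?]; cbn; intros -> -> ->; reflexivity. Qed.

Definition frame_map (f1 f2 f3 x : V3) : V3 :=
  vadd (vscal (vx x) f1) (vadd (vscal (vy x) f2) (vscal (vz x) f3)).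

Definition orthonormal (f1 f2 f3 : V3) : Prop :=
  dot f1 f1 = 1 /\ dot f2 f2 = 1 /\ dot f3 f3 = 1 /\
  dot f1 f2 = 0 /\ dot f1 f3 = 0 /\ dot f2 f3 = 0.

Ltac unfold_V3 :=
  unfold det3, frame_map, vsub, vadd, vscal, dot, cross, mkV, vx, vy, vz, e1, e2, e3 in *;
  simpl in *.

Ltac V3_ring := destruct_V3; try apply V3_ext; unfold_V3; ring.

Lemma frame_map_vadd f1 f2 f3 x y :
  frame_map f1 f2 f3 (vadd x y) = vadd (frame_map f1 f2 f3 x) (frame_map f1 f2 f3 y).
Proof. V3_ring. Qed.

Lemma frame_map_vscal f1 f2 f3 k x :
  frame_map f1 f2 f3 (vscal k x) = vscal k (frame_map f1 f2 f3 x).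
Proof. V3_ring. Qed.

Lemma vscal1 x : vscal 1 x = x.
Proof. V3_ring. Qed.

Lemma vscal_vscal k k' x : vscal k (vscal k' x) = vscal (k * k') x.
Proof. V3_ring. Qed.

Lemma vscal_unit k x : k = 1 -> vscal k x = x.
Proof. intros ->; apply vscal1. Qed.

Lemma cross_vscal_l k x y : cross (vscal k x) y = vscal k (cross x y).
Proof. V3_ring. Qed.

Lemma cross_vscal_r k x y : cross x (vscal k y) = vscal k (cross x y).
Proof. V3_ring. Qed.

Lemma dot_vscal k x y : dot (vscal k x) y = k * dot x y.
Proof. destruct_V3; unfold_V3; ring. Qed.

Lemma dot_ge0 x : 0 <= dot x x.
Proof. destruct_V3; unfold_V3; nra. Qed.

Lemma dot_eq0 x : dot x x = 0 -> x = vzero.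
Proof.
  destruct_V3; unfold_V3; intro H.
  assert (a = 0) by nra; assert (b = 0) by nra; assert (c = 0) by nra; subst; reflexivity.
Qed.

Lemma dot_comm x y : dot x y = dot y x.
Proof. destruct_V3; unfold_V3; ring. Qed.

Lemma vadd_vzero_l x : vadd vzero x = x.
Proof. V3_ring. Qed.

Lemma vscal_vadd_vzero k k' x y : k * k' = 1 -> vscal k x = vadd vzero y -> x = vscal k' y.
Proof.
  intros Hk E; rewrite vadd_vzero_l in E; rewrite <- E, vscal_vscal, Rmult_comm, Hk, vscal1.
  reflexivity.
Qed.

Lemma vnorm_eq_dot x y : vnorm x = vnorm y -> dot x x = dot y y.
Proof. unfold vnorm; intro H; apply sqrt_inj; auto using dot_ge0. Qed.

Lemma dot_vnorm x : dot x x = vnorm x * vnorm x.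
Proof. unfold vnorm; rewrite sqrt_sqrt; auto using dot_ge0. Qed.

Lemma vnorm_vscal_unit d x : d * d = 1 -> vnorm (vscal d x) = vnorm x.
Proof.
  intro Hd; unfold vnorm; f_equal.
  replace (dot (vscal d x) (vscal d x)) with (d * d * dot x x) by (destruct_V3; unfold_V3; ring).
  rewrite Hd; ring.
Qed.

Lemma cross_frame_map_expand f1 f2 f3 u v :
  cross (frame_map f1 f2 f3 u) (frame_map f1 f2 f3 v) =
  frame_map (cross f2 f3) (cross f3 f1) (cross f1 f2) (cross u v).
Proof. V3_ring. Qed.

(* Cramer's rule: [det3 f1 f2 f3] times the dual basis of [f1, f2, f3] is
   [cross f2 f3, cross f3 f1, cross f1 f2]. *)
Lemma det3_frame_expand f1 f2 f3 w :
  vscal (det3 f1 f2 f3) w =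
  frame_map (cross f2 f3) (cross f3 f1) (cross f1 f2) (mkV (dot f1 w) (dot f2 w) (dot f3 w)).
Proof. V3_ring. Qed.

Section Orthonormal.

Variables f1 f2 f3 : V3.
Hypothesis Hon : orthonormal f1 f2 f3.

Local Notation A := (frame_map f1 f2 f3).
Local Notation d := (det3 f1 f2 f3).

Lemma dot_frame_map x y : dot (A x) (A y) = dot x y.
Proof.
  destruct Hon as (H11 & H22 & H33 & H12 & H13 & H23).
  transitivity (vx x * vx y * dot f1 f1 + vy x * vy y * dot f2 f2 + vz x * vz y * dot f3 f3
    + (vx x * vy y + vy x * vx y) * dot f1 f2 + (vx x * vz y + vz x * vx y) * dot f1 f3
    + (vy x * vz y + vz x * vy y) * dot f2 f3).
  { destruct_V3; unfold_V3; ring. }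
  rewrite H11, H22, H33, H12, H13, H23; destruct_V3; unfold_V3; ring.
Qed.

Lemma vnorm_frame_map x : vnorm (A x) = vnorm x.
Proof. unfold vnorm; rewrite dot_frame_map; reflexivity. Qed.

Lemma det3_orthonormal_sqr : d * d = 1.
Proof.
  destruct Hon as (H11 & H22 & H33 & H12 & H13 & H23).
  transitivity (dot f1 f1 * (dot f2 f2 * dot f3 f3 - dot f2 f3 * dot f2 f3)
     - dot f1 f2 * (dot f1 f2 * dot f3 f3 - dot f2 f3 * dot f1 f3)
     + dot f1 f3 * (dot f1 f2 * dot f2 f3 - dot f2 f2 * dot f1 f3)).
  { destruct_V3; unfold_V3; ring. }
  rewrite H11, H22, H33, H12, H13, H23; ring.
Qed.

Lemma det3_orthonormal_cases : d = 1 \/ d = -1.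
Proof. pose proof det3_orthonormal_sqr; destruct (Rle_dec 0 d); [left | right]; nra. Qed.

Lemma cross_orthonormal :
  cross f2 f3 = vscal d f1 /\ cross f3 f1 = vscal d f2 /\ cross f1 f2 = vscal d f3.
Proof.
  destruct Hon as (H11 & H22 & H33 & H12 & H13 & H23).
  rewrite !det3_frame_expand, !(dot_comm f2 f1), !(dot_comm f3 f1), !(dot_comm f3 f2),
    H11, H22, H33, H12, H13, H23.
  split; [| split]; V3_ring.
Qed.

Lemma cross_frame_map u v : cross (A u) (A v) = vscal d (A (cross u v)).
Proof.
  rewrite cross_frame_map_expand.
  destruct cross_orthonormal as (-> & -> & ->); V3_ring.
Qed.

Lemma det3_frame_map u v w : det3 (A u) (A v) (A w) = d * det3 u v w.
Proof. unfold det3 at 1; rewrite cross_frame_map, dot_vscal, dot_frame_map; reflexivity. Qed.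

End Orthonormal.

Section Isometry.

Variable T : V3 -> V3.
Hypothesis HT : isometry T.

Local Notation U x := (vsub (T x) (T vzero)).

Lemma isometry_dot x y : dot (U x) (U y) = dot x y.
Proof.
  assert (Hdist : forall x y,
    dot (vsub (U x) (U y)) (vsub (U x) (U y)) = dot (vsub x y) (vsub x y)).
  { intros u v; rewrite <- (vnorm_eq_dot _ _ (HT u v)); f_equal; V3_ring. }
  assert (Hnorm : forall x, dot (U x) (U x) = dot x x).
  { intro u; specialize (Hdist u vzero).
    replace (vsub (U u) (U vzero)) with (U u) in Hdist by V3_ring.
    rewrite Hdist; V3_ring. }
  transitivity
    ((dot (U x) (U x) + dot (U y) (U y) - dot (vsub (U x) (U y)) (vsub (U x) (U y))) / 2).
  { generalize (U x) (U y); intros; destruct_V3; unfold_V3; field. }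
  rewrite Hdist, !Hnorm; destruct_V3; unfold_V3; field.
Qed.

Lemma isometry_orthonormal : orthonormal (U e1) (U e2) (U e3).
Proof. repeat split; rewrite isometry_dot; unfold_V3; ring. Qed.

Lemma isometry_affine x : T x = vadd (T vzero) (frame_map (U e1) (U e2) (U e3) x).
Proof.
  set (w := vsub (U x) (frame_map (U e1) (U e2) (U e3) x)).
  assert (Hw : dot w w = 0).
  { transitivity (dot (U x) (U x)
      - 2 * (vx x * dot (U x) (U e1) + vy x * dot (U x) (U e2) + vz x * dot (U x) (U e3))
      + (vx x * vx x * dot (U e1) (U e1) + vy x * vy x * dot (U e2) (U e2)
         + vz x * vz x * dot (U e3) (U e3) + 2 * vx x * vy x * dot (U e1) (U e2)
         + 2 * vx x * vz x * dot (U e1) (U e3) + 2 * vy x * vz x * dot (U e2) (U e3))).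
    { unfold w; generalize (U x) (U e1) (U e2) (U e3); intros; V3_ring. }
    rewrite !isometry_dot; V3_ring. }
  apply dot_eq0 in Hw; unfold w in Hw; revert Hw.
  generalize (T x) (T vzero) (frame_map (U e1) (U e2) (U e3) x); intros.
  destruct_V3; unfold_V3; injection Hw; intros; apply V3_ext; unfold vx, vy, vz; simpl; lra.
Qed.

Lemma orient_det_cases : orient_det T = 1 \/ orient_det T = -1.
Proof. exact (det3_orthonormal_cases _ _ _ isometry_orthonormal). Qed.

End Isometry.

Lemma isometry_strip_point T x v w : isometry T ->
  T (vadd x (vscal v w)) =
  vadd (T x)
    (vscal v (frame_map (vsub (T e1) (T vzero)) (vsub (T e2) (T vzero)) (vsub (T e3) (T vzero)) w)).
Proof.
  intro HT; rewrite (isometry_affine T HT (vadd x (vscal v w))), (isometry_affine T HT x).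
  rewrite frame_map_vadd, frame_map_vscal.
  generalize (frame_map (vsub (T e1) (T vzero)) (vsub (T e2) (T vzero)) (vsub (T e3) (T vzero))).
  intros; V3_ring.
Qed.

(** * Frenet apparatus of a 3-jet *)

(* The formulas of [curvature], [torsion], [beta_nf] and [xi_nf] as functions of the derivatives
   [D1, D2, D3] of the curve and of the values [a, a'] of the first angular function and its
   derivative. *)
Definition jet_tangent (D1 : V3) : V3 := vscal (/ vnorm D1) D1.
Definition jet_binormal (D1 D2 : V3) : V3 := vscal (/ vnorm (cross D1 D2)) (cross D1 D2).
Definition jet_normal (D1 D2 : V3) : V3 := cross (jet_binormal D1 D2) (jet_tangent D1).
Definition jet_curvature (D1 D2 : V3) : R := vnorm (cross D1 D2) / vnorm D1 ^ 3.
Definition jet_torsion (D1 D2 D3 : V3) : R := det3 D1 D2 D3 / vnorm (cross D1 D2) ^ 2.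
Definition jet_beta (D1 D2 D3 : V3) (a a' : R) : R :=
  PI / 2 - atan ((a' + jet_torsion D1 D2 D3) / (jet_curvature D1 D2 * sin a)).
Definition jet_ruling (D1 D2 D3 : V3) (a a' : R) : V3 :=
  vadd (vscal (cos (jet_beta D1 D2 D3 a a')) (jet_tangent D1))
       (vscal (sin (jet_beta D1 D2 D3 a a'))
              (vadd (vscal (cos a) (jet_normal D1 D2)) (vscal (sin a) (jet_binormal D1 D2)))).

Lemma xi_nf_jet c al s :
  xi_nf c al s = jet_ruling (Dv c s) (Dv (Dv c) s) (Dv (Dv (Dv c)) s) (al s) (Derive al s).
Proof. reflexivity. Qed.

Lemma curvature_jet c s : curvature c s = jet_curvature (Dv c s) (Dv (Dv c) s).
Proof. reflexivity. Qed.

Lemma sin_sign d a : d = 1 \/ d = -1 -> sin (d * a) = d * sin a.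
Proof.
  intros [-> | ->]; [rewrite !Rmult_1_l | replace (-1 * a) with (- a) by ring; rewrite sin_neg];
    ring.
Qed.

Lemma cos_sign d a : d = 1 \/ d = -1 -> cos (d * a) = cos a.
Proof.
  intros [-> | ->]; [rewrite Rmult_1_l | replace (-1 * a) with (- a) by ring; apply cos_neg].
  reflexivity.
Qed.

Lemma Rdiv_sign d x y : d = 1 \/ d = -1 -> (d * x) / (d * y) = x / y.
Proof.
  intros [-> | ->]; [rewrite !Rmult_1_l; reflexivity |].
  replace (-1 * x) with (- x) by ring; replace (-1 * y) with (- y) by ring.
  unfold Rdiv; rewrite Rinv_opp; ring.
Qed.

Section JetsUnderOrthogonalMap.

Variables f1 f2 f3 : V3.
Hypothesis Hon : orthonormal f1 f2 f3.

Local Notation A := (frame_map f1 f2 f3).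
Local Notation d := (det3 f1 f2 f3).

Lemma vnorm_cross_frame_map D1 D2 : vnorm (cross (A D1) (A D2)) = vnorm (cross D1 D2).
Proof.
  rewrite cross_frame_map, vnorm_vscal_unit, vnorm_frame_map by auto using det3_orthonormal_sqr.
  reflexivity.
Qed.

Lemma jet_tangent_frame_map D1 : jet_tangent (A D1) = A (jet_tangent D1).
Proof. unfold jet_tangent; rewrite vnorm_frame_map, frame_map_vscal by auto; reflexivity. Qed.

Lemma jet_binormal_frame_map D1 D2 :
  jet_binormal (A D1) (A D2) = vscal d (A (jet_binormal D1 D2)).
Proof.
  unfold jet_binormal; rewrite vnorm_cross_frame_map, cross_frame_map, frame_map_vscal, !vscal_vscal
    by exact Hon.
  f_equal; ring.
Qed.

Lemma jet_normal_frame_map D1 D2 : jet_normal (A D1) (A D2) = A (jet_normal D1 D2).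
Proof.
  unfold jet_normal; rewrite jet_binormal_frame_map, jet_tangent_frame_map, cross_vscal_l.
  rewrite cross_frame_map, vscal_vscal, det3_orthonormal_sqr, vscal1 by auto; reflexivity.
Qed.

Lemma jet_curvature_frame_map D1 D2 : jet_curvature (A D1) (A D2) = jet_curvature D1 D2.
Proof. unfold jet_curvature; rewrite vnorm_cross_frame_map, vnorm_frame_map; auto. Qed.

Lemma jet_torsion_frame_map D1 D2 D3 :
  jet_torsion (A D1) (A D2) (A D3) = d * jet_torsion D1 D2 D3.
Proof.
  unfold jet_torsion; rewrite vnorm_cross_frame_map, det3_frame_map by auto.
  unfold Rdiv; ring.
Qed.

Lemma jet_beta_frame_map D1 D2 D3 a a' :
  jet_beta (A D1) (A D2) (A D3) (d * a) (d * a') = jet_beta D1 D2 D3 a a'.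
Proof.
  pose proof (det3_orthonormal_cases _ _ _ Hon) as Hd.
  unfold jet_beta; rewrite jet_curvature_frame_map, jet_torsion_frame_map, sin_sign by auto.
  rewrite <- Rmult_plus_distr_l, <- Rdiv_sign with (d := d) (y := jet_curvature D1 D2 * sin a)
    by auto.
  do 3 f_equal; ring.
Qed.

Lemma jet_ruling_frame_map D1 D2 D3 a a' :
  jet_ruling (A D1) (A D2) (A D3) (d * a) (d * a') = A (jet_ruling D1 D2 D3 a a').
Proof.
  pose proof (det3_orthonormal_cases _ _ _ Hon) as Hd.
  unfold jet_ruling.
  rewrite jet_beta_frame_map, jet_tangent_frame_map, jet_normal_frame_map, jet_binormal_frame_map,
    sin_sign, cos_sign by auto.
  repeat rewrite ?frame_map_vadd, ?frame_map_vscal.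
  rewrite (vscal_vscal (d * sin a)).
  replace (d * sin a * d) with (sin a * (d * d)) by ring.
  rewrite det3_orthonormal_sqr, Rmult_1_r by auto; reflexivity.
Qed.

End JetsUnderOrthogonalMap.

Lemma vnorm_opp x : vnorm (vscal (-1) x) = vnorm x.
Proof. apply vnorm_vscal_unit; ring. Qed.

Lemma jet_tangent_reverse D1 : jet_tangent (vscal (-1) D1) = vscal (-1) (jet_tangent D1).
Proof. unfold jet_tangent; rewrite vnorm_opp, !vscal_vscal; f_equal; ring. Qed.

Lemma jet_binormal_reverse D1 D2 :
  jet_binormal (vscal (-1) D1) D2 = vscal (-1) (jet_binormal D1 D2).
Proof. unfold jet_binormal; rewrite cross_vscal_l, vnorm_opp, !vscal_vscal; f_equal; ring. Qed.

Lemma jet_normal_reverse D1 D2 : jet_normal (vscal (-1) D1) D2 = jet_normal D1 D2.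
Proof.
  unfold jet_normal.
  rewrite jet_binormal_reverse, jet_tangent_reverse, cross_vscal_l, cross_vscal_r.
  rewrite vscal_vscal, vscal_unit by ring; reflexivity.
Qed.

Lemma jet_curvature_reverse D1 D2 : jet_curvature (vscal (-1) D1) D2 = jet_curvature D1 D2.
Proof. unfold jet_curvature; rewrite cross_vscal_l, !vnorm_opp; reflexivity. Qed.

Lemma jet_beta_reverse D1 D2 D3 a a' :
  jet_beta (vscal (-1) D1) D2 (vscal (-1) D3) (- a) a' = PI - jet_beta D1 D2 D3 a a'.
Proof.
  assert (Htor : jet_torsion (vscal (-1) D1) D2 (vscal (-1) D3) = jet_torsion D1 D2 D3).
  { unfold jet_torsion; rewrite cross_vscal_l, vnorm_opp; f_equal; V3_ring. }
  unfold jet_beta; rewrite jet_curvature_reverse, Htor, sin_neg.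
  replace (jet_curvature D1 D2 * - sin a) with (- (jet_curvature D1 D2 * sin a)) by ring.
  unfold Rdiv; rewrite Rinv_opp.
  replace ((a' + jet_torsion D1 D2 D3) * - / (jet_curvature D1 D2 * sin a))
    with (- ((a' + jet_torsion D1 D2 D3) * / (jet_curvature D1 D2 * sin a))) by ring.
  rewrite atan_opp; field.
Qed.

Lemma jet_ruling_reverse D1 D2 D3 a a' :
  jet_ruling (vscal (-1) D1) D2 (vscal (-1) D3) (- a) a' = jet_ruling D1 D2 D3 a a'.
Proof.
  unfold jet_ruling.
  rewrite jet_beta_reverse, sin_PI_x, Rtrigo_facts.cos_pi_minus, sin_neg, cos_neg.
  rewrite jet_tangent_reverse, jet_normal_reverse, jet_binormal_reverse, !vscal_vscal.
  replace (- cos (jet_beta D1 D2 D3 a a') * -1) with (cos (jet_beta D1 D2 D3 a a')) by ring.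
  replace (- sin a * -1) with (sin a) by ring; reflexivity.
Qed.

(** * Derivatives of transformed curves *)

Definition ex_derive_curve (g : R -> V3) : Prop := forall t,
  ex_derive (fun u => vx (g u)) t /\ ex_derive (fun u => vy (g u)) t /\
  ex_derive (fun u => vz (g u)) t.

Lemma smooth_curve_ex_derive c : smooth_curve c ->
  ex_derive_curve c /\ ex_derive_curve (Dv c) /\ ex_derive_curve (Dv (Dv c)).
Proof.
  intros (Hx & Hy & Hz); split; [| split]; intro t; repeat split.
  all: first [ exact (Hx 1%nat t) | exact (Hy 1%nat t) | exact (Hz 1%nat t)
             | exact (Hx 2%nat t) | exact (Hy 2%nat t) | exact (Hz 2%nat t)
             | exact (Hx 3%nat t) | exact (Hy 3%nat t) | exact (Hz 3%nat t) ].
Qed.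

Lemma is_derive_lin3 (a b c : R -> R) k0 k1 k2 k3 t :
  ex_derive a t -> ex_derive b t -> ex_derive c t ->
  is_derive (fun u => k0 + (a u * k1 + (b u * k2 + c u * k3))) t
    (Derive a t * k1 + (Derive b t * k2 + Derive c t * k3)).
Proof. intros; auto_derive; auto; rewrite !Rmult_1_l; reflexivity. Qed.

Lemma is_derive_scal_reverse (a : R -> R) k t :
  ex_derive a (- t) -> is_derive (fun u => k * a (- u)) t (- k * Derive a (- t)).
Proof. intros; auto_derive; auto; change (fun x => a x) with a; ring. Qed.

Section AffineAndReversal.

Variables (g : R -> V3) (f1 f2 f3 p : V3) (k : R).
Hypothesis Hg : ex_derive_curve g.

Local Notation A := (frame_map f1 f2 f3).
Local Notation gx := (fun u => vx (g u)).
Local Notation gy := (fun u => vy (g u)).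
Local Notation gz := (fun u => vz (g u)).

Lemma ex_derive_curve_frame_affine : ex_derive_curve (fun t => vadd p (A (g t))).
Proof.
  intro t; destruct (Hg t) as (Hx & Hy & Hz).
  repeat split; eexists; exact (is_derive_lin3 gx gy gz _ _ _ _ t Hx Hy Hz).
Qed.

Lemma ex_derive_curve_scal_reverse : ex_derive_curve (fun t => vscal k (g (- t))).
Proof.
  intro t; destruct (Hg (- t)) as (Hx & Hy & Hz); repeat split; eexists.
  exact (is_derive_scal_reverse gx k t Hx).
  exact (is_derive_scal_reverse gy k t Hy).
  exact (is_derive_scal_reverse gz k t Hz).
Qed.

Lemma Dv_frame_affine (h : R -> V3) : (forall t, h t = vadd p (A (g t))) ->
  forall t, Dv h t = A (Dv g t).
Proof.
  intros Hh t; destruct (Hg t) as (Hx & Hy & Hz).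
  unfold Dv; apply V3_ext.
  - rewrite (Derive_ext (fun u => vx (h u))
               (fun u => vx p + (vx (g u) * vx f1 + (vy (g u) * vx f2 + vz (g u) * vx f3))))
      by (intro u; rewrite Hh; reflexivity).
    exact (is_derive_unique _ _ _ (is_derive_lin3 gx gy gz _ _ _ _ t Hx Hy Hz)).
  - rewrite (Derive_ext (fun u => vy (h u))
               (fun u => vy p + (vx (g u) * vy f1 + (vy (g u) * vy f2 + vz (g u) * vy f3))))
      by (intro u; rewrite Hh; reflexivity).
    exact (is_derive_unique _ _ _ (is_derive_lin3 gx gy gz _ _ _ _ t Hx Hy Hz)).
  - rewrite (Derive_ext (fun u => vz (h u))
               (fun u => vz p + (vx (g u) * vz f1 + (vy (g u) * vz f2 + vz (g u) * vz f3))))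
      by (intro u; rewrite Hh; reflexivity).
    exact (is_derive_unique _ _ _ (is_derive_lin3 gx gy gz _ _ _ _ t Hx Hy Hz)).
Qed.

Lemma Dv_scal_reverse (h : R -> V3) : (forall t, h t = vscal k (g (- t))) ->
  forall t, Dv h t = vscal (- k) (Dv g (- t)).
Proof.
  intros Hh t; destruct (Hg (- t)) as (Hx & Hy & Hz).
  unfold Dv; apply V3_ext.
  - rewrite (Derive_ext (fun u => vx (h u)) (fun u => k * vx (g (- u))))
      by (intro u; rewrite Hh; reflexivity).
    exact (is_derive_unique _ _ _ (is_derive_scal_reverse gx k t Hx)).
  - rewrite (Derive_ext (fun u => vy (h u)) (fun u => k * vy (g (- u))))
      by (intro u; rewrite Hh; reflexivity).
    exact (is_derive_unique _ _ _ (is_derive_scal_reverse gy k t Hy)).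
  - rewrite (Derive_ext (fun u => vz (h u)) (fun u => k * vz (g (- u))))
      by (intro u; rewrite Hh; reflexivity).
    exact (is_derive_unique _ _ _ (is_derive_scal_reverse gz k t Hz)).
Qed.

End AffineAndReversal.

Lemma Derive_eq_on_interval (f g : R -> R) a b x : a < b ->
  ex_derive f x -> ex_derive g x -> (forall t, a <= t <= b -> f t = g t) -> a <= x <= b ->
  Derive f x = Derive g x.
Proof.
  intros Hab Hf Hg Heq Hx.
  assert (Hd : derivable_pt_lim (fun t => f t - g t) x (Derive f x - Derive g x)).
  { apply is_derive_Reals, (is_derive_minus f g); apply Derive_correct; assumption. }
  apply Rminus_diag_uniq; set (L := Derive f x - Derive g x) in *.
  destruct (Req_dec L 0) as [HL | HL]; [exact HL | exfalso].
  destruct (Hd (Rabs L) (Rabs_pos_lt _ HL)) as [[del Hdel0] Hdel]; simpl in Hdel.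
  (* The difference quotient of [f - g] vanishes along steps that stay in [a, b], also at an
     endpoint. *)
  set (m := Rmin (del / 2) ((b - a) / 2)).
  assert (Hm : 0 < m) by (apply Rmin_pos; lra).
  assert (Hm1 : m <= del / 2) by apply Rmin_l.
  assert (Hm2 : m <= (b - a) / 2) by apply Rmin_r.
  set (h := if Rle_dec x ((a + b) / 2) then m else - m).
  assert (Hh : h <> 0 /\ Rabs h < del /\ a <= x + h <= b)
    by (unfold h; destruct Rle_dec; split_Rabs; lra).
  destruct Hh as (Hh0 & Hhdel & Hhx).
  specialize (Hdel h Hh0 Hhdel); rewrite !Heq in Hdel by lra.
  replace ((g (x + h) - g (x + h) - (g x - g x)) / h - L) with (- L) in Hdel by (field; auto).
  rewrite Rabs_Ropp in Hdel; lra.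
Qed.

Lemma Dv_eq_on_interval (g h : R -> V3) a b : a < b -> ex_derive_curve g -> ex_derive_curve h ->
  (forall t, a <= t <= b -> g t = h t) -> forall t, a <= t <= b -> Dv g t = Dv h t.
Proof.
  intros Hab Hg Hh Heq t Ht; destruct (Hg t) as (Hgx & Hgy & Hgz), (Hh t) as (Hhx & Hhy & Hhz).
  unfold Dv; f_equal.
  all: apply (Derive_eq_on_interval _ _ a b); auto; intros u Hu; rewrite Heq; auto.
Qed.

(* The conclusion has the shape of the hypothesis for [Dv g], so the lemma can be iterated. *)
Lemma Dv_reflection (g : R -> V3) f1 f2 f3 p k a b : a < b -> ex_derive_curve g ->
  (forall t, a <= t <= b -> vscal k (g (- t)) = vadd p (frame_map f1 f2 f3 (g t))) ->
  forall t, a <= t <= b -> vscal (- k) (Dv g (- t)) = vadd vzero (frame_map f1 f2 f3 (Dv g t)).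
Proof.
  intros Hab Hg Hrel t Ht.
  rewrite <- (Dv_scal_reverse g k Hg (fun t => vscal k (g (- t))) (fun _ => eq_refl) t).
  rewrite vadd_vzero_l,
    <- (Dv_frame_affine g f1 f2 f3 p Hg (fun t => vadd p (frame_map f1 f2 f3 (g t)))
          (fun _ => eq_refl) t).
  apply (Dv_eq_on_interval _ _ a b); auto.
  - apply ex_derive_curve_scal_reverse; assumption.
  - apply ex_derive_curve_frame_affine; assumption.
Qed.

(** * Chord-preserving self-maps of an arc *)

Definition clamp (a b x : R) : R := Rmax a (Rmin b x).

Lemma clamp_in a b x : a <= b -> a <= clamp a b x <= b.
Proof. unfold clamp, Rmax, Rmin; repeat destruct Rle_dec; lra. Qed.

Lemma clamp_id a b x : a <= x <= b -> clamp a b x = x.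
Proof. unfold clamp, Rmax, Rmin; repeat destruct Rle_dec; lra. Qed.

Lemma Rabs_clamp_le a b x y : Rabs (clamp a b x - clamp a b y) <= Rabs (x - y).
Proof. unfold clamp, Rmax, Rmin; repeat destruct Rle_dec; split_Rabs; lra. Qed.

Lemma Rmult_div_pos sg k u : 0 < sg * k * u -> 0 < sg * (k / u).
Proof.
  intro H; assert (Hu : u <> 0) by (intro E; rewrite E, Rmult_0_r in H; lra).
  replace (sg * (k / u)) with (sg * k * u / (u * u)) by (field; exact Hu).
  apply Rdiv_lt_0_compat; [exact H | nra].
Qed.

Lemma continuous_injective_increasing (f : R -> R) p q : continuity f ->
  (forall x y, p <= x <= q -> p <= y <= q -> f x = f y -> x = y) -> f p < f q ->
  forall x y, p <= x -> x < y -> y <= q -> f x < f y.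
Proof.
  intros Hf Hinj Hpq.
  assert (Hright : forall x, p <= x < q -> f x < f q).
  { intros x Hx; destruct (Rlt_le_dec (f x) (f q)) as [Hlt | Hle]; [exact Hlt | exfalso].
    destruct (IVT_gen f p x (f q) Hf) as [z [Hz Hfz]].
    { rewrite Rmin_left, Rmax_right; lra. }
    rewrite Rmin_left, Rmax_right in Hz by lra.
    assert (z = q) by (apply Hinj; lra); lra. }
  intros x y Hpx Hxy Hyq.
  destruct (Rlt_le_dec (f x) (f y)) as [Hlt | Hle]; [exact Hlt | exfalso].
  assert (Hxq : f x < f q) by (apply Hright; lra).
  destruct (IVT_gen f y q (f x) Hf) as [z [Hz Hfz]].
  { rewrite Rmin_left, Rmax_right; lra. }
  rewrite Rmin_left, Rmax_right in Hz by lra.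
  assert (z = x) by (apply Hinj; lra); lra.
Qed.

Lemma continuous_positive_off_point (g : R -> R) p q t0 : p <= t0 <= q ->
  (forall t, p <= t <= q -> continuity_pt g t) ->
  (forall t, p <= t <= q -> t <> t0 -> 0 < g t) ->
  forall e, 0 < e -> exists m, 0 < m /\ forall t, p <= t <= q -> g t < m -> Rabs (t - t0) < e.
Proof.
  intros Ht0 Hg Hpos e He.
  assert (Hmin : forall a b, p <= a -> b <= q -> (forall t, a <= t <= b -> t <> t0) ->
            exists m, 0 < m /\ forall t, a <= t <= b -> m <= g t).
  { intros a b Hpa Hbq Hab; destruct (Rle_lt_dec a b) as [Hle | Hlt].
    - destruct (continuity_ab_min g a b Hle) as [t1 [Ht1 Hat1]].
      { intros t Ht; apply Hg; lra. }
      exists (g t1); split; [apply Hpos; [lra | apply Hab; lra] | exact Ht1].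
    - exists 1; split; [lra | intros; lra]. }
  destruct (Hmin p (t0 - e)) as [m1 [Hm1 Hg1]]; [lra | lra | intros; lra |].
  destruct (Hmin (t0 + e) q) as [m2 [Hm2 Hg2]]; [lra | lra | intros; lra |].
  exists (Rmin m1 m2); split; [apply Rmin_pos; assumption |].
  intros t Ht Hgt; pose proof (Rmin_l m1 m2); pose proof (Rmin_r m1 m2).
  destruct (Rlt_le_dec (Rabs (t - t0)) e) as [Hlt | Hge]; [exact Hlt | exfalso].
  destruct (Rle_lt_dec t t0).
  - rewrite Rabs_left1 in Hge by lra; specialize (Hg1 t ltac:(lra)); lra.
  - rewrite Rabs_right in Hge by lra; specialize (Hg2 t ltac:(lra)); lra.
Qed.

Lemma is_lim_difference_quotient f y :
  ex_derive f y -> is_lim (fun x => (f x - f y) / (x - y)) y (Derive f y).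
Proof.
  intro Hf; apply is_lim_spec; intro eps.
  destruct (proj1 (is_derive_Reals _ _ _) (Derive_correct _ _ Hf) eps (cond_pos eps)) as [del Hdel].
  exists del; intros x Hx Hxy; change (Rabs (x - y) < del) in Hx.
  specialize (Hdel (x - y) ltac:(lra) Hx).
  assert (Ex : y + (x - y) = x :> R) by ring; rewrite Ex in Hdel; exact Hdel.
Qed.

Lemma derivable_pt_lim_is_lim f y (l : R) :
  is_lim (fun x => (f x - f y) / (x - y)) y l -> derivable_pt_lim f y l.
Proof.
  intros Hlim eps Heps; apply is_lim_spec in Hlim.
  destruct (Hlim (mkposreal eps Heps)) as [del Hdel].
  exists del; intros h Hh0 Hh.
  specialize (Hdel (y + h)); replace (y + h - y) with h in Hdel by ring.
  apply Hdel; [change (Rabs (y + h - y) < del); replace (y + h - y) with h by ring; exact Hh | lra].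
Qed.

Definition chord_sq (c : R -> V3) (x y : R) : R := dot (vsub (c x) (c y)) (vsub (c x) (c y)).

Lemma chord_sq_self c y : chord_sq c y y = 0.
Proof. unfold chord_sq; generalize (c y); intros; V3_ring. Qed.

Lemma chord_sq_eq0 c x y : chord_sq c x y = 0 -> c x = c y.
Proof.
  unfold chord_sq; intro H; apply dot_eq0 in H; revert H; generalize (c x) (c y); intros u v H.
  destruct_V3; unfold_V3; injection H; intros; apply V3_ext; unfold vx, vy, vz; simpl; lra.
Qed.

Lemma ex_derive_sum_sq (a b c : R -> R) ka kb kc x :
  ex_derive a x -> ex_derive b x -> ex_derive c x ->
  ex_derive (fun t => (a t + -1 * ka) * (a t + -1 * ka) + (b t + -1 * kb) * (b t + -1 * kb)
     + (c t + -1 * kc) * (c t + -1 * kc)) x.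
Proof. intros; auto_derive; repeat split; assumption. Qed.

Lemma continuity_pt_chord_sq c y x : ex_derive_curve c -> continuity_pt (fun t => chord_sq c t y) x.
Proof.
  intro Hc; destruct (Hc x) as (Hx & Hy & Hz).
  apply continuity_pt_filterlim, (ex_derive_continuous (fun t => chord_sq c t y)).
  exact (ex_derive_sum_sq (fun t => vx (c t)) (fun t => vy (c t)) (fun t => vz (c t)) _ _ _ x
           Hx Hy Hz).
Qed.

Lemma is_lim_chord_ratio c y : ex_derive_curve c -> vnorm (Dv c y) = 1 ->
  is_lim (fun x => chord_sq c x y / (x - y) ^ 2) y 1.
Proof.
  intros Hc Hunit; destruct (Hc y) as (Hx & Hy & Hz).
  set (q := fun (f : R -> R) x => (f x - f y) / (x - y)).
  assert (Hq : forall f, ex_derive f y ->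
                 is_lim (fun x => q f x * q f x) y (Derive f y * Derive f y)).
  { intros f Hf; apply (is_lim_mult (q f) (q f) y (Derive f y) (Derive f y));
      [apply is_lim_difference_quotient; assumption .. | exact I]. }
  apply is_lim_ext_loc with
    (fun x => q (fun u => vx (c u)) x * q (fun u => vx (c u)) x
            + q (fun u => vy (c u)) x * q (fun u => vy (c u)) x
            + q (fun u => vz (c u)) x * q (fun u => vz (c u)) x).
  { exists (mkposreal 1 Rlt_0_1); intros x _ Hxy.
    unfold q, chord_sq; generalize (c x) (c y); intros u v.
    destruct_V3; unfold_V3; field; lra. }
  replace (Finite 1) with (Finite (dot (Dv c y) (Dv c y)))
    by (rewrite dot_vnorm, Hunit; f_equal; ring).
  apply is_lim_plus'; [apply is_lim_plus' |]; apply Hq; assumption.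
Qed.

Section ChordPreservingDerivative.

Variables (c : R -> V3) (phi : R -> R) (b sg : R).
Hypotheses (Hc : ex_derive_curve c) (Hunit_b : vnorm (Dv c b) = 1)
  (Hunit_phib : vnorm (Dv c (phi b)) = 1) (Hcont : continuity_pt phi b) (Hsg : sg * sg = 1)
  (Hchord : locally b (fun x => chord_sq c (phi x) (phi b) = chord_sq c x b))
  (Hsign : Rbar_locally' b (fun x => 0 < sg * ((phi x - phi b) / (x - b)))).

Local Notation Q x := ((phi x - phi b) / (x - b)).

(* [Q x * Q x] is the quotient of the chord ratios at [b] and at [phi b], which both tend to 1. *)
Lemma is_lim_quotient_sqr : is_lim (fun x => Q x * Q x) b 1.
Proof.
  assert (Hne : Rbar_locally' b (fun x => phi x <> phi b)).
  { apply filter_imp with (2 := Hsign); intros x Hx E; rewrite E, Rminus_diag in Hx.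
    unfold Rdiv in Hx; rewrite Rmult_0_l, Rmult_0_r in Hx; lra. }
  assert (Hsrc := is_lim_chord_ratio c b Hc Hunit_b).
  assert (Htgt : is_lim (fun x => chord_sq c (phi x) (phi b) / (phi x - phi b) ^ 2) b 1).
  { apply (is_lim_comp (fun t => chord_sq c t (phi b) / (t - phi b) ^ 2) phi b 1 (phi b)).
    - apply is_lim_chord_ratio; assumption.
    - apply is_lim_continuity; assumption.
    - apply filter_imp with (2 := Hne); intros x Hx E; apply Hx; injection E; auto. }
  assert (Hpos : Rbar_locally' b (fun x => 0 < chord_sq c x b / (x - b) ^ 2)).
  { apply is_lim_spec in Hsrc; apply filter_imp with (2 := Hsrc (mkposreal (1 / 2) ltac:(lra))).
    simpl; intros x Hx; apply Rabs_lt_between in Hx; lra. }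
  apply is_lim_ext_loc with (fun x => chord_sq c x b / (x - b) ^ 2 /
                                     (chord_sq c (phi x) (phi b) / (phi x - phi b) ^ 2)).
  - assert (Hchord' : Rbar_locally' b (fun x => chord_sq c (phi x) (phi b) = chord_sq c x b)).
    { apply filter_imp with (2 := Hchord); auto. }
    assert (Hxb : Rbar_locally' b (fun x => x <> b))
      by exact (filter_forall (F := locally b) (fun x => x <> b -> x <> b) (fun x H => H)).
    apply filter_imp
      with (2 := filter_and _ _ (filter_and _ _ Hne Hpos) (filter_and _ _ Hchord' Hxb)).
    intros x ((Hk & HD) & Heq & Hu); rewrite Heq.
    assert (chord_sq c x b <> 0) by (intro E; rewrite E in HD; unfold Rdiv in HD; lra).
    field; repeat split; try apply Rminus_eq_contra; auto.
  - replace (Finite 1) with (Rbar_div 1 1) by (simpl; f_equal; field).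
    apply is_lim_div; auto; simpl; [intro E; injection E; lra | exact I].
Qed.

Lemma derivable_pt_lim_chord_preserving : derivable_pt_lim phi b sg.
Proof.
  apply derivable_pt_lim_is_lim.
  assert (Habs : is_lim (fun x => sqrt (Q x * Q x)) b 1).
  { rewrite <- sqrt_1; apply (is_lim_comp_continuous (fun x => Q x * Q x) sqrt b 1).
    - exact is_lim_quotient_sqr.
    - apply continuous_sqrt. }
  assert (Hsq : is_lim (fun x => sg * Q x) b 1).
  { apply is_lim_ext_loc with (2 := Habs); apply filter_imp with (2 := Hsign); intros x Hx.
    replace (Q x * Q x) with ((sg * Q x) * (sg * Q x))
      by (transitivity (sg * sg * (Q x * Q x)); [ring | rewrite Hsg; ring]).
    apply sqrt_square; lra. }
  replace (Finite sg) with (Rbar_mult sg 1) by (simpl; f_equal; ring).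
  apply is_lim_ext with (2 := is_lim_scal_l _ sg _ _ Hsq); intro x.
  transitivity (sg * sg * Q x); [ring | rewrite Hsg; ring].
Qed.

End ChordPreservingDerivative.

Section ChordPreservingSelfMap.

Variables (l : R) (c : R -> V3) (phi : R -> R).
Hypotheses (Hl : 0 < l) (Hc : ex_derive_curve c)
  (Hunit : forall s, in_I l s -> vnorm (Dv c s) = 1)
  (Hinj : forall s t, in_I l s -> in_I l t -> c s = c t -> s = t)
  (Hphi_in : forall s, in_I l s -> in_I l (phi s))
  (Hphi_chord : forall s t, in_I l s -> in_I l t -> chord_sq c (phi s) (phi t) = chord_sq c s t).

(* [phi] extended by constants outside the interval, so that the global IVT, MVT and
   continuity lemmas apply. *)
Local Notation phi_ext := (fun x => phi (clamp (- (l / 2)) (l / 2) x)).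

Lemma self_map_injective s t : in_I l s -> in_I l t -> phi s = phi t -> s = t.
Proof.
  intros Hs Ht E; apply Hinj; auto; apply chord_sq_eq0.
  rewrite <- Hphi_chord, E by auto; apply chord_sq_self.
Qed.

Lemma self_map_continuous_within s0 : in_I l s0 -> forall e, 0 < e ->
  exists d, 0 < d /\ forall s, in_I l s -> Rabs (s - s0) < d -> Rabs (phi s - phi s0) < e.
Proof.
  intros Hs0 e He.
  destruct (continuous_positive_off_point (fun t => chord_sq c t (phi s0)) (- (l / 2)) (l / 2)
              (phi s0) (Hphi_in s0 Hs0)) with (e := e) as [m [Hm Hsep]]; auto.
  { intros t _; apply continuity_pt_chord_sq; exact Hc. }
  { intros t Ht Hne; destruct (dot_ge0 (vsub (c t) (c (phi s0)))) as [Hpos | Hz]; [exact Hpos |].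
    exfalso; apply Hne, Hinj; auto; apply chord_sq_eq0; symmetry; exact Hz. }
  destruct (proj1 (continuity_pt_locally _ _) (continuity_pt_chord_sq c s0 s0 Hc) (mkposreal m Hm))
    as [d Hd].
  exists d; split; [apply cond_pos |]; intros s Hs Hss.
  apply Hsep; [apply Hphi_in; exact Hs |]; rewrite Hphi_chord by auto.
  specialize (Hd s Hss); simpl in Hd; rewrite chord_sq_self, Rminus_0_r in Hd.
  exact (Rle_lt_trans _ _ _ (Rle_abs _) Hd).
Qed.

Lemma continuity_self_map_clamp : continuity phi_ext.
Proof.
  intro x; apply continuity_pt_locally; intro e.
  destruct (self_map_continuous_within (clamp (- (l / 2)) (l / 2) x)) with (e := pos e)
    as [d [Hd Hphi]]; [apply clamp_in; lra | apply cond_pos |].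
  exists (mkposreal d Hd); intros y Hy; apply Hphi; [apply clamp_in; lra |].
  exact (Rle_lt_trans _ _ _ (Rabs_clamp_le _ _ _ _) Hy).
Qed.

Lemma self_map_strictly_monotone : exists sg, (sg = 1 \/ sg = -1) /\
  forall x y, in_I l x -> in_I l y -> x < y -> sg * phi x < sg * phi y.
Proof.
  assert (Hext : forall x, in_I l x -> phi_ext x = phi x) by (intros; rewrite clamp_id; auto).
  assert (HinjI : forall x y, - (l / 2) <= x <= l / 2 -> - (l / 2) <= y <= l / 2 ->
                    phi_ext x = phi_ext y -> x = y).
  { intros x y Hx Hy; rewrite !Hext by auto; apply self_map_injective; auto. }
  assert (Hlo : in_I l (- (l / 2))) by (unfold in_I; lra).
  assert (Hhi : in_I l (l / 2)) by (unfold in_I; lra).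
  destruct (Rtotal_order (phi (- (l / 2))) (phi (l / 2))) as [Hlt | [Heq | Hgt]].
  - exists 1; split; [left; reflexivity |]; intros x y Hx Hy Hxy.
    rewrite !Rmult_1_l, <- (Hext x Hx), <- (Hext y Hy).
    apply (continuous_injective_increasing phi_ext (- (l / 2)) (l / 2));
      try (unfold in_I in *; lra).
    + apply continuity_self_map_clamp.
    + exact HinjI.
    + rewrite (Hext _ Hlo), (Hext _ Hhi); exact Hlt.
  - apply self_map_injective in Heq; unfold in_I in *; lra.
  - exists (-1); split; [right; reflexivity |]; intros x y Hx Hy Hxy.
    rewrite <- (Hext x Hx), <- (Hext y Hy).
    apply (continuous_injective_increasing (fun x => -1 * phi_ext x) (- (l / 2)) (l / 2));
      try (unfold in_I in *; lra).
    + intro t; apply continuity_pt_scal, continuity_self_map_clamp.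
    + intros u v Hu Hv E; apply HinjI; auto; lra.
    + rewrite (Hext _ Hlo), (Hext _ Hhi); lra.
Qed.

Lemma self_map_derivable sg : sg = 1 \/ sg = -1 ->
  (forall x y, in_I l x -> in_I l y -> x < y -> sg * phi x < sg * phi y) ->
  forall s, - (l / 2) < s < l / 2 -> derivable_pt_lim phi_ext s sg.
Proof.
  intros Hsg Hmono s Hs.
  assert (Hs' : in_I l s) by (unfold in_I; lra).
  assert (Hext : forall x, in_I l x -> phi_ext x = phi x) by (intros; rewrite clamp_id; auto).
  assert (Hnear : forall P : R -> Prop, (forall y, in_I l y -> P y) -> locally s P).
  { intros P HP; apply (locally_interval _ _ (- (l / 2)) (l / 2)); simpl; try lra.
    intros y Hy1 Hy2; apply HP; unfold in_I; lra. }
  apply derivable_pt_lim_chord_preserving with c.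
  - exact Hc.
  - apply Hunit; exact Hs'.
  - rewrite Hext by exact Hs'; apply Hunit, Hphi_in, Hs'.
  - apply continuity_self_map_clamp.
  - destruct Hsg as [-> | ->]; ring.
  - apply Hnear; intros y Hy; rewrite !Hext by assumption; apply Hphi_chord; assumption.
  - apply Hnear; intros y Hy Hys; apply Rmult_div_pos; rewrite !Hext by assumption.
    destruct (Rlt_or_le y s) as [Hlt | Hle].
    + specialize (Hmono y s Hy Hs' Hlt); nra.
    + specialize (Hmono s y Hs' Hy ltac:(lra)); nra.
Qed.

Lemma self_map_affine :
  exists sg K, (sg = 1 \/ sg = -1) /\ forall s, in_I l s -> phi s = sg * s + K.
Proof.
  destruct self_map_strictly_monotone as [sg [Hsg Hmono]].
  exists sg, (phi (- (l / 2)) + sg * (l / 2)); split; [exact Hsg |]; intros s Hs.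
  assert (Hext : forall x, in_I l x -> phi_ext x = phi x) by (intros; rewrite clamp_id; auto).
  assert (Hlo : in_I l (- (l / 2))) by (unfold in_I; lra).
  destruct (MVT_gen (fun x => phi_ext x - sg * x) (- (l / 2)) s (fun _ => 0)) as [t [_ Ht]].
  - intros x Hx; rewrite Rmin_left, Rmax_right in Hx by (unfold in_I in Hs; lra).
    replace 0 with (sg - sg * 1) by ring.
    apply (is_derive_minus phi_ext (fun x => sg * x)).
    + apply is_derive_Reals, (self_map_derivable sg Hsg Hmono); unfold in_I in Hs; lra.
    + apply is_derive_scal, (is_derive_id (K := R_AbsRing)).
  - intros x _; apply continuity_pt_minus; [apply continuity_self_map_clamp |].
    apply continuity_pt_scal, derivable_continuous_pt, derivable_pt_id.
  - rewrite (Hext s Hs), (Hext _ Hlo) in Ht; lra.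
Qed.

Lemma self_map_id_or_reflection :
  (forall s, in_I l s -> phi s = s) \/ (forall s, in_I l s -> phi s = - s).
Proof.
  destruct self_map_affine as [sg [K [Hsg Haff]]].
  assert (Hlo : in_I l (- (l / 2))) by (unfold in_I; lra).
  assert (Hhi : in_I l (l / 2)) by (unfold in_I; lra).
  pose proof (Hphi_in _ Hlo) as Hplo; pose proof (Hphi_in _ Hhi) as Hphi_hi.
  rewrite Haff in Hplo, Hphi_hi by assumption; unfold in_I in Hplo, Hphi_hi.
  assert (HK : K = 0) by (destruct Hsg; subst; lra).
  destruct Hsg; [left | right]; intros s Hs; rewrite Haff, HK by assumption; subst; ring.
Qed.

End ChordPreservingSelfMap.

Lemma symmetry_reverses_curve l c T : 0 < l -> ex_derive_curve c ->
  (forall s, in_I l s -> vnorm (Dv c s) = 1) ->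
  (forall s t, in_I l s -> in_I l t -> c s = c t -> s = t) -> isometry T ->
  (forall s, in_I l s -> exists t, in_I l t /\ T (c s) = c t) ->
  (exists s, in_I l s /\ T (c s) <> c s) ->
  forall s, in_I l s -> T (c s) = c (- s).
Proof.
  intros Hl Hc Hunit Hinj HT Hmaps [s0 [Hs0 Hmoved]].
  destruct (choice (fun s t => in_I l s -> in_I l t /\ T (c s) = c t)) as [phi Hphi].
  { intro s; destruct (Rle_dec (- (l / 2)) s), (Rle_dec s (l / 2));
      try (exists 0; intro Hs; unfold in_I in Hs; lra).
    destruct (Hmaps s) as [t Ht]; [split; assumption | exists t; auto]. }
  assert (Hchord : forall s t, in_I l s -> in_I l t -> chord_sq c (phi s) (phi t) = chord_sq c s t).
  { intros s t Hs Ht; unfold chord_sq.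
    rewrite <- (proj2 (Hphi s Hs)), <- (proj2 (Hphi t Ht)); apply vnorm_eq_dot, HT. }
  destruct (self_map_id_or_reflection l c phi Hl Hc Hunit Hinj (fun s Hs => proj1 (Hphi s Hs))
              Hchord) as [Hid | Hrefl].
  - exfalso; apply Hmoved; rewrite (proj2 (Hphi s0 Hs0)), Hid; auto.
  - intros s Hs; rewrite (proj2 (Hphi s Hs)), Hrefl; auto.
Qed.

(** * Transport of normal forms by a reversing symmetry *)

Section ReversingSymmetry.

Variables (l : R) (c : R -> V3) (T : V3 -> V3).
Hypotheses (Hl : 0 < l) (Hsmooth : smooth_curve c) (HT : isometry T)
  (Hrev : forall s, in_I l s -> T (c s) = c (- s)).

Local Notation A :=
  (frame_map (vsub (T e1) (T vzero)) (vsub (T e2) (T vzero)) (vsub (T e3) (T vzero))).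
Local Notation d := (orient_det T).

Lemma reflection_jets t : in_I l t ->
  Dv c (- t) = vscal (-1) (A (Dv c t)) /\ Dv (Dv c) (- t) = A (Dv (Dv c) t) /\
  Dv (Dv (Dv c)) (- t) = vscal (-1) (A (Dv (Dv (Dv c)) t)).
Proof.
  destruct (smooth_curve_ex_derive c Hsmooth) as (Hc0 & Hc1 & Hc2).
  assert (Hlt : - (l / 2) < l / 2) by lra.
  assert (R0 : forall t, - (l / 2) <= t <= l / 2 -> vscal 1 (c (- t)) = vadd (T vzero) (A (c t))).
  { intros u Hu; rewrite vscal1, <- (isometry_affine T HT), Hrev; auto. }
  pose proof (Dv_reflection c _ _ _ _ 1 _ _ Hlt Hc0 R0) as R1.
  pose proof (Dv_reflection (Dv c) _ _ _ vzero (- 1) _ _ Hlt Hc1 R1) as R2.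
  pose proof (Dv_reflection (Dv (Dv c)) _ _ _ vzero (- - 1) _ _ Hlt Hc2 R2) as R3.
  intro Ht; split; [| split].
  - apply (vscal_vadd_vzero (- 1)); [ring | exact (R1 t Ht)].
  - rewrite <- (vscal1 (A _)); apply (vscal_vadd_vzero (- - 1)); [ring | exact (R2 t Ht)].
  - apply (vscal_vadd_vzero (- - - 1)); [ring | exact (R3 t Ht)].
Qed.

Lemma rev_curve_jets t : in_I l t ->
  Dv (rev_curve c) t = A (Dv c t) /\ Dv (Dv (rev_curve c)) t = A (Dv (Dv c) t) /\
  Dv (Dv (Dv (rev_curve c))) t = A (Dv (Dv (Dv c)) t).
Proof.
  destruct (smooth_curve_ex_derive c Hsmooth) as (Hc0 & Hc1 & Hc2).
  pose proof (Dv_scal_reverse c 1 Hc0 (rev_curve c) (fun t => eq_sym (vscal1 _))) as D1.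
  pose proof (Dv_scal_reverse (Dv c) (- 1) Hc1 _ D1) as D2.
  pose proof (Dv_scal_reverse (Dv (Dv c)) (- - 1) Hc2 _ D2) as D3.
  intro Ht; destruct (reflection_jets t Ht) as (J1 & J2 & J3).
  rewrite D3, D2, D1, J1, J2, J3, !vscal_vscal, !vscal_unit by ring; auto.
Qed.

Lemma curvature_rev_curve s : in_I l s -> curvature (rev_curve c) s = curvature c s.
Proof.
  intro Hs; destruct (rev_curve_jets s Hs) as (J1 & J2 & _).
  rewrite !curvature_jet, J1, J2; apply jet_curvature_frame_map, isometry_orthonormal, HT.
Qed.

Lemma curvature_even s : in_I l s -> curvature c (- s) = curvature c s.
Proof.
  intro Hs; destruct (reflection_jets s Hs) as (J1 & J2 & _).
  rewrite !curvature_jet, J1, J2, jet_curvature_reverse.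
  apply jet_curvature_frame_map, isometry_orthonormal, HT.
Qed.

Section AngularFunctions.

Variables al al' : R -> R.
Hypotheses (Hal : forall t, ex_derive al t) (Hal' : forall t, ex_derive al' t).

Lemma ruling_rev_curve : (forall s, in_I l s -> al' s = d * al s) ->
  forall s, in_I l s -> A (xi_nf c al s) = xi_nf (rev_curve c) al' s.
Proof.
  intros Hrel s Hs.
  assert (HD : Derive al' s = d * Derive al s).
  { rewrite (Derive_eq_on_interval al' (fun t => d * al t) (- (l / 2)) (l / 2)); auto; try lra.
    - apply Derive_scal.
    - apply ex_derive_scal; auto. }
  destruct (rev_curve_jets s Hs) as (J1 & J2 & J3).
  rewrite !xi_nf_jet, J1, J2, J3, Hrel, HD by exact Hs.
  symmetry; apply jet_ruling_frame_map, isometry_orthonormal, HT.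
Qed.

Lemma ruling_reflect : (forall s, in_I l s -> al' s = - (d * al (- s))) ->
  forall s, in_I l s -> A (xi_nf c al (- s)) = xi_nf c al' s.
Proof.
  intros Hrel s Hs.
  assert (Hs' : in_I l (- s)) by (unfold in_I in *; lra).
  assert (HD : Derive al' s = d * Derive al (- s)).
  { rewrite (Derive_eq_on_interval al' (fun t => - d * al (- t)) (- (l / 2)) (l / 2));
      auto; try lra.
    - apply is_derive_unique; replace (d * Derive al (- s)) with (- - d * Derive al (- s)) by ring.
      apply is_derive_scal_reverse, Hal.
    - eexists; apply is_derive_scal_reverse, Hal.
    - intros t Ht; rewrite Hrel by exact Ht; ring. }
  destruct (reflection_jets (- s) Hs') as (J1 & J2 & J3); rewrite Ropp_involutive in J1, J2, J3.
  rewrite !xi_nf_jet, J1, J2, J3, Hrel, HD by exact Hs; rewrite jet_ruling_reverse.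
  symmetry; apply jet_ruling_frame_map, isometry_orthonormal, HT.
Qed.

Lemma strip_rev_curve : (forall s, in_I l s -> al' s = d * al s) ->
  germ_eq l (fun s v => T (normal_form c al s v)) (normal_form (rev_curve c) al').
Proof.
  intros Hrel; exists 1; split; [lra |]; intros s v Hs _.
  unfold normal_form; rewrite isometry_strip_point, Hrev, ruling_rev_curve; auto.
Qed.

Lemma strip_reflect : (forall s, in_I l s -> al' s = - (d * al (- s))) ->
  germ_eq l (fun s v => T (normal_form c al (- s) v)) (normal_form c al').
Proof.
  intros Hrel; exists 1; split; [lra |]; intros s v Hs _.
  assert (Hs' : in_I l (- s)) by (unfold in_I in *; lra).
  unfold normal_form; rewrite isometry_strip_point, Hrev, Ropp_involutive,
    ruling_reflect; auto.
Qed.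

End AngularFunctions.

End ReversingSymmetry.

Lemma cos_inj_same_sign x y : - (PI / 2) < x < PI / 2 -> - (PI / 2) < y < PI / 2 ->
  0 < x * y -> cos x = cos y -> x = y.
Proof.
  intros Hx Hy Hxy E; pose proof PI_RGT_0.
  destruct (Rlt_le_dec 0 x).
  - apply cos_inj; try lra; nra.
  - assert (x < 0) by nra; assert (y < 0) by nra.
    cut (- x = - y); [lra |]; apply cos_inj; try lra; rewrite !cos_neg; exact E.
Qed.

Lemma continuous_nonzero_same_sign (f : R -> R) a b : continuity f ->
  (forall t, a <= t <= b -> f t <> 0) -> forall x y, a <= x <= b -> a <= y <= b -> 0 < f x * f y.
Proof.
  intros Hf Hnz x y Hx Hy.
  destruct (Rlt_le_dec 0 (f x * f y)) as [Hpos | Hneg]; [exact Hpos | exfalso].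
  destruct (IVT_gen f x y 0 Hf) as [z [Hz Hfz]].
  { unfold Rmin, Rmax; destruct Rle_dec; split; nra. }
  apply (Hnz z); [unfold Rmin, Rmax in Hz; destruct Rle_dec in Hz; lra | exact Hfz].
Qed.

Lemma smooth_fun_ex_derive f : smooth_fun f -> forall t, ex_derive f t.
Proof. intros Hf t; exact (Hf 1%nat t). Qed.

Lemma smooth_fun_continuity f : smooth_fun f -> continuity f.
Proof.
  intros Hf t; apply continuity_pt_filterlim, (ex_derive_continuous f), smooth_fun_ex_derive, Hf.
Qed.

Section FirstAngularFunction.

Variables (l : R) (c : R -> V3) (T : V3 -> V3).
Hypotheses (Hl : 0 < l) (Hsmooth : smooth_curve c) (HT : isometry T)
  (Hrev : forall s, in_I l s -> T (c s) = c (- s))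
  (Hkappa : forall s, in_I l s -> curvature c s <> 0).

Lemma inverse_first_angle_eq (al al_s : R -> R) :
  (forall s, in_I l s -> - (PI / 2) < al s < PI / 2) ->
  (forall s, in_I l s -> - (PI / 2) < al_s s < PI / 2 /\ 0 < al_s s * al s /\
     curvature (rev_curve c) s * cos (al_s s) = curvature c s * cos (al s)) ->
  forall s, in_I l s -> al_s s = al s.
Proof.
  intros Hal Has s Hs; destruct (Has s Hs) as (Hbound & Hsign & Hmu).
  apply cos_inj_same_sign; auto.
  rewrite (curvature_rev_curve l c T) in Hmu by assumption.
  apply Rmult_eq_reg_l with (curvature c s); auto.
Qed.

Lemma first_angle_even (al : R -> R) : smooth_fun al ->
  (forall s, in_I l s -> - (PI / 2) < al s < PI / 2 /\ al s <> 0) ->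
  (forall s, in_I l s -> mu_nf c al (- s) = mu_nf c al s) ->
  forall s, in_I l s -> al (- s) = al s.
Proof.
  intros Hsa Hal Hmu s Hs.
  assert (Hs' : in_I l (- s)) by (unfold in_I in *; lra).
  apply cos_inj_same_sign; try apply Hal; auto.
  - apply (continuous_nonzero_same_sign al (- (l / 2)) (l / 2)); auto using smooth_fun_continuity.
    intros t Ht; apply Hal, Ht.
  - specialize (Hmu s Hs); unfold mu_nf in Hmu.
    rewrite (curvature_even l c T) in Hmu by assumption.
    apply Rmult_eq_reg_l with (curvature c s); auto.
Qed.

End FirstAngularFunction.

Theorem theorem4p2
  (l : R) (c : R -> V3) (alpha alpha_s : R -> R) (T : V3 -> V3) :
  0 < l ->
  smooth_curve c ->
  (forall s, in_I l s -> vnorm (Dv c s) = 1) ->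
  (forall s t, in_I l s -> in_I l t -> c s = c t -> s = t) ->
  (forall s, in_I l s -> curvature c s <> 0) ->
  (* F = normal_form c alpha in D_*(C) *)
  smooth_fun alpha ->
  (forall s, in_I l s -> - (PI / 2) < alpha s < PI / 2 /\ alpha s <> 0) ->
  (forall s t, in_I l s -> in_I l t -> mu_nf c alpha s < curvature c t) ->
  (* alpha_s : the first angular function of the inverse F_* *)
  smooth_fun alpha_s ->
  (forall s, in_I l s ->
     - (PI / 2) < alpha_s s < PI / 2 /\ 0 < alpha_s s * alpha s /\
     curvature (rev_curve c) s * cos (alpha_s s) = curvature c s * cos (alpha s)) ->
  nontrivial_symmetry l c T ->
  (positive_isometry T ->
     germ_eq l (fun s v => T (normal_form c alpha s v)) (normal_form (rev_curve c) alpha_s) /\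
     ((forall s, in_I l s -> mu_nf c alpha (- s) = mu_nf c alpha s) ->
      germ_eq l (fun s v => T (normal_form c alpha (- s) v))
                (normal_form c (fun s => - alpha s)))) /\
  (negative_isometry T ->
     germ_eq l (fun s v => T (normal_form c alpha s v))
               (normal_form (rev_curve c) (fun s => - alpha_s s)) /\
     ((forall s, in_I l s -> mu_nf c alpha (- s) = mu_nf c alpha s) ->
      germ_eq l (fun s v => T (normal_form c alpha (- s) v)) (normal_form c alpha))).
Proof.
  intros Hl Hsmooth Hunit Hinj Hkappa Hsa Hal _ Hsas Has (HT & _ & Hmaps & _ & Hmoved).
  assert (Hrev : forall s, in_I l s -> T (c s) = c (- s)).
  { apply symmetry_reverses_curve; try assumption.
    - exact (proj1 (smooth_curve_ex_derive c Hsmooth)).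
    - intros s Hs; destruct (Hmaps (c s)) as [t [Ht E]]; [exists s; auto | exists t; auto].
    - destruct Hmoved as [x [[s [Hs ->]] Hx]]; exists s; auto. }
  pose proof (smooth_fun_ex_derive _ Hsa) as Ha; pose proof (smooth_fun_ex_derive _ Hsas) as Has'.
  assert (Hinv : forall s, in_I l s -> alpha_s s = alpha s)
    by exact (inverse_first_angle_eq l c T Hl Hsmooth HT Hrev Hkappa alpha alpha_s
                (fun s Hs => proj1 (Hal s Hs)) Has).
  assert (Heven : (forall s, in_I l s -> mu_nf c alpha (- s) = mu_nf c alpha s) ->
                  forall s, in_I l s -> alpha (- s) = alpha s)
    by exact (first_angle_even l c T Hl Hsmooth HT Hrev Hkappa alpha Hsa Hal).
  split; intros [_ Hsign]; [assert (Hd : orient_det T = 1) | assert (Hd : orient_det T = -1)];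
    try (destruct (orient_det_cases T HT); lra); split; try intro Hmu.
  - apply (strip_rev_curve l c T Hl Hsmooth HT Hrev); [exact Ha | exact Has' |].
    intros s Hs; rewrite Hd, Hinv by exact Hs; ring.
  - apply (strip_reflect l c T Hl Hsmooth HT Hrev); [exact Ha | exact (fun t => ex_derive_opp _ _ (Ha t)) |].
    intros s Hs; rewrite Hd, Heven by assumption; ring.
  - apply (strip_rev_curve l c T Hl Hsmooth HT Hrev); [exact Ha | exact (fun t => ex_derive_opp _ _ (Has' t)) |].
    intros s Hs; rewrite Hd, Hinv by exact Hs; ring.
  - apply (strip_reflect l c T Hl Hsmooth HT Hrev); [exact Ha | exact Ha |].
    intros s Hs; rewrite Hd, Heven by assumption; ring.
Qed.
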